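(* Let $G$ be a subgroup of $\Sigma_n$ and let $G^+=G\cap\Sigma_n^+$. Suppose that the set of atoms $S=\{s_1,\dots,s_n\}$ of $G^+$ has exactly $n$ elements, generates $G$, and that there is a positive integer $k$ with $D_{s_i}=D_i^k$ for all $i$. Define a binary operation on $S$ by $s_i*s_j=s_{\psi(s_i)(j)}$. Then the following are equivalent: (i) $G$ is permutation-free, i.e. the only permutation matrix in $G$ is the identity; (ii) $s(s*t)=t(t*s)$ in $G$ for all $s,t\in S$; (iii) $(S,* )$ is a cycle set and $G$ is its structure group (i.e. $s\mapsto s$ induces an isomorphism from the structure group of $(S,* )$ onto $G$).
   Context: $\Sigma_n$ is the group of $n\times n$ monomial matrices (exactly one nonzero entry in each row and column) over $\mathbb Q[q,q^{-1}]$, $q$ an indeterminate, whose nonzero entries are integer powers of $q$; $\Sigma_n^+$ is the submonoid of those whose nonzero entries are nonnegative powers of $q$. For $\sigma\in\mathfrak S_n$, $P_\sigma$ is the matrix with entry $1$ at $(i,\sigma(i))$ and $0$ elsewhere. Every monomial matrix $m$ decomposes uniquely as $m=D_mP_m$ with $D_m$ diagonal and $P_m=P_{\psi(m)}$ a permutation matrix; $\psi(m)\in\mathfrak S_n$ is the associated permutation. $D_i$ denotes $\mathrm{diag}(1,\dots,1,q,1,\dots,1)$ with $q$ in the $i$-th position. An atom of $G^+$ is an element $a\neq I$ of $G^+$ such that $a=bc$ with $b,c\in G^+$ implies $b=I$ or $c=I$. A cycle set is a set $S$ with binary operation $*$ such that each $t\mapsto s*t$ is bijective and $(s*t)*(s*u)=(t*s)*(t*u)$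 for all $s,t,u$; its structure group is the group with generators $S$ and relations $s(s*t)=t(t*s)$ for $s\ne t$. *)

From HB Require Import structures.
From mathcomp Require Import all_boot all_order all_algebra all_fingroup.
From mathcomp Require Export fraction.
Set Implicit Arguments. Unset Strict Implicit. Unset Printing Implicit Defensive.
Import Order.TTheory GRing.Theory Num.Theory.
Local Open Scope ring_scope.

(* The coefficient field: Q(q) = fraction field of Q[q]; Q[q,q^-1] embeds in it,
   and all matrices considered have entries 0 or integer powers of q. *)
Definition LF : Type := {fraction {poly rat}}.
Definition q : LF := FracField.tofrac 'X.

Section Monomial.
Variable n : nat.
Local Notation M := 'M[LF]_n.

Definition qpow (x : LF) : Prop := exists z : int, x = q ^ z.
Definition qpow_nneg (x : LF) : Prop := exists k : nat, x = q ^+ k.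

Definition monomial (m : M) : Prop :=
  (forall i, exists! j, m i j != 0) /\
  (forall j, exists! i, m i j != 0) /\
  (forall i j, m i j != 0 -> qpow (m i j)).

Definition monomial_pos (m : M) : Prop :=
  monomial m /\ (forall i j, m i j != 0 -> qpow_nneg (m i j)).

Definition psi (m : M) (i : 'I_n) : 'I_n :=
  odflt i [pick j | m i j != 0].

(* diagonal part D_m in m = D_m P_m *)
Definition Dpart (m : M) : M := diag_mx (\row_r m r (psi m r)).

Definition Dmat (i : 'I_n) : M := diag_mx (\row_r (if r == i then q else 1)).

(* a subgroup of GL_n(LF) (possibly infinite), given as a predicate *)
Definition is_group (H : M -> Prop) : Prop :=
  H 1%:M /\ (forall a b, H a -> H b -> H (a *m b)) /\
  (forall a, H a -> a \in unitmx /\ H (invmx a)).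

Definition subgroup_Sigma (G : M -> Prop) : Prop :=
  is_group G /\ (forall g, G g -> monomial g).

Definition Gplus (G : M -> Prop) (m : M) : Prop := G m /\ monomial_pos m.

Definition atom (G : M -> Prop) (a : M) : Prop :=
  Gplus G a /\ a <> 1%:M /\
  (forall b c, Gplus G b -> Gplus G c -> a = b *m c -> b = 1%:M \/ c = 1%:M).

Definition generates (s : 'I_n -> M) (G : M -> Prop) : Prop :=
  forall H : M -> Prop, is_group H -> (forall i, H (s i)) -> forall g, G g -> H g.

Definition permutation_free (G : M -> Prop) : Prop :=
  forall sg : 'S_n, G (perm_mx sg) -> sg = 1%g.

End Monomial.

(* Cycle sets on the index set 'I_n (S = {s_1,...,s_n} labelled by 'I_n) *)
Definition cycle_set (n : nat) (op : 'I_n -> 'I_n -> 'I_n) : Prop :=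
  (forall i, bijective (op i)) /\
  (forall i j l, op (op i j) (op i l) = op (op j i) (op j l)).

(* Structure group of (S, op), presented by words: a letter (i, b) stands for
   s_i if b = false and s_i^{-1} if b = true.  The structure group is the
   quotient of words by the congruence [sg_equiv] generated by free
   cancellation and the relations s (s*t) = t (t*s) for s <> t. *)
Definition letter (n : nat) := ('I_n * bool)%type.

Inductive sg_equiv (n : nat) (op : 'I_n -> 'I_n -> 'I_n) :
    seq (letter n) -> seq (letter n) -> Prop :=
  | sge_refl w : sg_equiv op w w
  | sge_sym w1 w2 : sg_equiv op w1 w2 -> sg_equiv op w2 w1
  | sge_trans w1 w2 w3 :
      sg_equiv op w1 w2 -> sg_equiv op w2 w3 -> sg_equiv op w1 w3
  | sge_cancel u v (i : 'I_n) (b : bool) :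
      sg_equiv op (u ++ [:: (i, b); (i, ~~ b)] ++ v) (u ++ v)
  | sge_rel u v (i j : 'I_n) : i != j ->
      sg_equiv op (u ++ [:: (i, false); (op i j, false)] ++ v)
                  (u ++ [:: (j, false); (op j i, false)] ++ v).

Definition eval_letter (n : nat) (s : 'I_n -> 'M[LF]_n) (l : letter n) : 'M[LF]_n :=
  if l.2 then invmx (s l.1) else s l.1.

Definition eval_word (n : nat) (s : 'I_n -> 'M[LF]_n) (w : seq (letter n)) : 'M[LF]_n :=
  foldr (fun l acc => eval_letter s l *m acc) 1%:M w.

(* the map s_i |-> s_i induces an isomorphism from the structure group of
   (S, op) onto G: well-defined and injective (kernel = the congruence) and
   surjective onto G *)
Definition is_structure_group (n : nat) (op : 'I_n -> 'I_n -> 'I_n)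
    (s : 'I_n -> 'M[LF]_n) (G : 'M[LF]_n -> Prop) : Prop :=
  (forall w1 w2, eval_word s w1 = eval_word s w2 <-> sg_equiv op w1 w2) /\
  (forall g, G g <-> exists w, g = eval_word s w).

(* k-th matrix power (generic in n, since 'M_n is a ring only for n > 0) *)
Definition mxpow (n : nat) (A : 'M[LF]_n) (k : nat) : 'M[LF]_n :=
  iter k (mulmx A) 1%:M.

From HB Require Import structures.
From mathcomp Require Import all_boot all_order all_algebra all_fingroup.
From mathcomp Require Import zify.
Import Order.TTheory GRing.Theory Num.Theory.
Local Open Scope ring_scope.
Set Implicit Arguments. Unset Strict Implicit. Unset Printing Implicit Defensive.

(* An element of a subgroup of Sigma_n is [monomx d p], with entry [q ^ d i]
   at [(i, p i)]; the hypothesis on diagonal parts says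
   [s i = monomx (k e_i) (τ i)].  A permutation matrix [P <> 1] in [G] would
   make every atom [s] factor as [(s P^-1) P] inside [G^+], so [G] is
   permutation-free and its elements are determined by their exponent vectors.
   As [s_i s_(i*j)] and [s_j s_(j*i)] both have exponent vector
   [k (e_i + e_j)], the relations (ii) and the cycle-set axioms follow.  Thus
   all three conditions hold, (iii) by Ore's method: exponents in [G] are
   multiples of [k], so an element with nonnegative exponents is a positive
   word (peel off an [s r] with [d r > 0]); two positive words with equal value
   and first letters [i <> j] both pass through [s_i s_(i*j) = s_j s_(j*i)],
   which solves the word problem for positive words, and the Ore condition
   makes every word equivalent to a fraction [a b^-1] of positive words. *)

Lemma q_neq0 : q != 0.
Proof. by rewrite /q tofrac_eq0 polyX_eq0. Qed.

Lemma expq_eq1 (m : nat) : q ^+ m = 1 -> m = 0%N.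
Proof.
move=> qm1; have Xm1 : ('X : {poly rat}) ^+ m = 1.
  by apply/eqP; rewrite -tofrac_eq tofracXn tofrac1 -/q qm1.
by have := size_polyXn rat m; rewrite Xm1 size_poly1 => -[].
Qed.

Lemma expqz_inj : injective (fun z : int => q ^ z).
Proof.
suff expqz_eq1 (z : int) : q ^ z = 1 -> z = 0.
  move=> z w /= qzw; apply/eqP; rewrite -subr_eq0; apply/eqP/expqz_eq1.
  by rewrite expfzDr ?q_neq0 // qzw -expfzDr ?q_neq0 // subrr.
case: z => m; first by rewrite -exprnP => /expq_eq1 ->.
by rewrite NegzE -exprnN => /(congr1 GRing.inv); rewrite invrK invr1 => /expq_eq1.
Qed.

Lemma sum_perm (V : nmodType) (T : finType) (f : T -> V) (p : {perm T}) :
  \sum_t f (p t) = \sum_t f t.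
Proof. by rewrite [RHS](reindex_inj (@perm_inj _ p)). Qed.

Lemma dvdz_le (m : nat) (x : int) : 0 < x -> (m%:Z %| x)%Z -> m%:Z <= x.
Proof. move=> x_gt0; rewrite dvdzE absz_nat => /dvdn_leq; lia. Qed.

Section MonomialMatrices.
Variable n : nat.
Local Notation M := 'M[LF]_n.

Definition monomx (d : 'I_n -> int) (p : 'S_n) : M :=
  \matrix_(i, j) (if p i == j then q ^ d i else 0).

Lemma monomx_ext d d' p : d =1 d' -> monomx d p = monomx d' p.
Proof. by move=> dd'; apply/matrixP=> i j; rewrite !mxE dd'. Qed.

Lemma mul_monomx d1 p1 d2 p2 :
  monomx d1 p1 *m monomx d2 p2 = monomx (fun i => d1 i + d2 (p1 i)) (p1 * p2)%g.
Proof.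
apply/matrixP=> i j; rewrite !mxE (bigD1 (p1 i)) //= big1 => [|l /negbTE p1il].
  by rewrite !mxE eqxx permM addr0; case: eqP; rewrite ?mulr0 ?expfzDr ?q_neq0.
by rewrite !mxE eq_sym p1il mul0r.
Qed.

Lemma monomx1 : monomx (fun _ => 0) 1%g = 1%:M.
Proof. by apply/matrixP=> i j; rewrite !mxE perm1 expr0z; case: eqP. Qed.

Lemma perm_mx_monomx p : perm_mx p = monomx (fun _ => 0) p.
Proof. by apply/matrixP=> i j; rewrite !mxE expr0z; case: eqP. Qed.

Lemma monomx_inj d p d' p' : monomx d p = monomx d' p' -> p = p' /\ d =1 d'.
Proof.
move/matrixP=> dp; have p'E i : p' i = p i.
  move: (dp i (p i)); rewrite !mxE eqxx; case: eqP => // _ /eqP.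
  by rewrite (negbTE (expfz_neq0 _ q_neq0)).
split=> [|i]; first by apply/permP=> i; rewrite p'E.
by move: (dp i (p i)); rewrite !mxE p'E eqxx => /expqz_inj.
Qed.

Lemma mul_monomxV d p :
  monomx d p *m monomx (fun i => - d (p^-1 i)%g) p^-1%g = 1%:M.
Proof.
by rewrite mul_monomx mulgV -monomx1; apply: monomx_ext => i; rewrite permK subrr.
Qed.

Lemma monomx_unit d p : monomx d p \in unitmx.
Proof. exact: (mulmx1_unit (mul_monomxV d p)).1. Qed.

Lemma invmx_monomx d p : invmx (monomx d p) = monomx (fun i => - d (p^-1 i)%g) p^-1%g.
Proof. by rewrite -[RHS](mulKmx (monomx_unit d p)) mul_monomxV mulmx1. Qed.

Lemma monomx_ldiv e pe d p : invmx (monomx e pe) *m monomx d p =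
  monomx (fun i => d (pe^-1 i)%g - e (pe^-1 i)%g) (pe^-1 * p)%g.
Proof. by rewrite invmx_monomx mul_monomx; apply: monomx_ext => i; rewrite addrC. Qed.

Lemma psi_monomx d p i : psi (monomx d p) i = p i.
Proof.
rewrite /psi; case: pickP => [j|/(_ (p i))] /=; rewrite mxE.
  by case: (p i =P j) => [-> | _]; rewrite ?eqxx.
by rewrite eqxx expfz_neq0 ?q_neq0.
Qed.

Lemma Dpart_monomx d p : Dpart (monomx d p) = monomx d 1%g.
Proof.
apply/matrixP=> i j; rewrite !mxE psi_monomx perm1 eqxx.
by case: (i =P j) => [->|]; rewrite ?mulr1n ?mulr0n.
Qed.

Lemma mxpow_Dmat i m :
  mxpow (Dmat i) m = monomx (fun r => if r == i then m%:Z else 0) 1%g.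
Proof.
elim: m => [|m IHm].
  by rewrite /mxpow /= -monomx1; apply: monomx_ext => r; case: ifP.
have Dmat_monomx : Dmat i = monomx (fun r => if r == i then 1 else 0) 1%g.
  apply/matrixP=> r c; rewrite !mxE perm1.
  by case: (r =P c) => [->|]; rewrite ?mulr1n ?mulr0n //; case: ifP.
rewrite /mxpow iterS -/(mxpow _ _) IHm Dmat_monomx mul_monomx mulg1.
by apply: monomx_ext => r; rewrite perm1; case: ifP => //; lia.
Qed.

Lemma monomial_monomx d p : monomial (monomx d p).
Proof.
split; [|split] => [i|j|i j].
- exists (p i); split=> [|j]; first by rewrite mxE eqxx expfz_neq0 ?q_neq0.
  by rewrite mxE; case: (p i =P j) => // _; rewrite eqxx.
- exists (p^-1 j)%g; split=> [|i]; first by rewrite mxE permKV eqxx expfz_neq0 ?q_neq0.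
  by rewrite mxE; case: (p i =P j) => [<- _|_]; rewrite ?permK ?eqxx.
- by rewrite mxE; case: (p i =P j) => _; [exists (d i) | rewrite eqxx].
Qed.

Lemma monomial_pos_monomx d p : (forall i, 0 <= d i) -> monomial_pos (monomx d p).
Proof.
move=> d_ge0; split=> [|i j]; first exact: monomial_monomx.
rewrite mxE; case: (p i =P j) => _; last by rewrite eqxx.
by exists `|d i|%N; rewrite exprnP gez0_abs.
Qed.

Lemma monomialP m : monomial m -> exists d p, m = monomx d p.
Proof.
case=> row_m [col_m qpow_m].
have psiP i j : (m i j != 0) = (j == psi m i).
  have [j0 [mij0 j0_uniq]] := row_m i; rewrite /psi.
  case: pickP => [j' mij'|/(_ j0)/negbT/negP//] /=.
  by apply/idP/eqP => [/j0_uniq <-|->//]; rewrite (j0_uniq _ mij').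
have psi_inj : injective (psi m).
  move=> i1 i2 psi12; have [i0 [_ i0_uniq]] := col_m (psi m i1).
  by rewrite -(i0_uniq i1) ?(i0_uniq i2) ?psiP ?psi12.
have [d dE] : exists d : 'I_n -> int, forall i, m i (psi m i) = q ^ d i.
  apply: (@fin_all_exists _ (fun _ => int) (fun i z => m i (psi m i) = q ^ z)) => i.
  by apply: qpow_m; rewrite psiP.
exists d, (perm psi_inj); apply/matrixP=> i j; rewrite mxE permE.
case: eqP => [<-//|psi_ij]; apply/eqP; rewrite -[_ == 0]negbK psiP.
by apply/eqP=> /esym.
Qed.

End MonomialMatrices.

Section Words.
Variable n : nat.
Implicit Types (u v w a b c : seq (letter n)).

Definition positive (l : letter n) := ~~ l.2.

Definition word_inv w : seq (letter n) := rev [seq (l.1, ~~ l.2) | l <- w].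

Lemma word_inv_cat u v : word_inv (u ++ v) = word_inv v ++ word_inv u.
Proof. by rewrite /word_inv map_cat rev_cat. Qed.

Lemma word_inv_cons l w : word_inv (l :: w) = word_inv w ++ [:: (l.1, ~~ l.2)].
Proof. by rewrite /word_inv /= rev_cons cats1. Qed.

Variable op : 'I_n -> 'I_n -> 'I_n.

Lemma sg_equiv_ctx x y u v : sg_equiv op u v -> sg_equiv op (x ++ u ++ y) (x ++ v ++ y).
Proof.
elim=> {u v} [w | w1 w2 _ IH | w1 w2 w3 _ IH1 _ IH2 | u v i b | u v i j ij].
- exact: sge_refl.
- exact: sge_sym.
- exact: sge_trans IH1 IH2.
- by have := sge_cancel op (x ++ u) (v ++ y) i b; rewrite -!catA.
- by have := sge_rel op (x ++ u) (v ++ y) ij; rewrite -!catA.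
Qed.

Lemma sg_equiv_cat u u' v v' : sg_equiv op u u' -> sg_equiv op v v' ->
  sg_equiv op (u ++ v) (u' ++ v').
Proof.
move=> uu' vv'; apply: sge_trans (sg_equiv_ctx [::] v uu') _.
by have := sg_equiv_ctx u' [::] vv'; rewrite !cats0.
Qed.

Lemma sg_equiv_catl x u v : sg_equiv op u v -> sg_equiv op (x ++ u) (x ++ v).
Proof. exact/sg_equiv_cat/sge_refl. Qed.

Lemma cat_word_inv w : sg_equiv op (w ++ word_inv w) [::].
Proof.
elim: w => [|[i b] w IHw] /=; first exact: sge_refl.
rewrite word_inv_cons catA; apply: sge_trans (sge_cancel op [::] [::] i b).
by have := sg_equiv_ctx [:: (i, b)] [:: (i, ~~ b)] IHw; rewrite -catA.
Qed.

Lemma cat_inv_word w : sg_equiv op (word_inv w ++ w) [::].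
Proof.
elim: w => [|[i b] w IHw] /=; first exact: sge_refl.
rewrite word_inv_cons -catA; apply: sge_trans IHw.
by have := sge_cancel op (word_inv w) w i (~~ b); rewrite negbK.
Qed.

Lemma sg_equiv_inv u v : sg_equiv op u v -> sg_equiv op (word_inv u) (word_inv v).
Proof.
move=> uv; apply: sge_trans (_ : sg_equiv op (word_inv u ++ v ++ word_inv v) _).
  by have := sg_equiv_catl (word_inv u) (cat_word_inv v); rewrite cats0 => /sge_sym.
apply: sge_trans (_ : sg_equiv op ((word_inv u ++ u) ++ word_inv v) _).
  by rewrite -catA; apply/sg_equiv_catl/sg_equiv_cat/sge_refl/sge_sym.
exact: sg_equiv_cat (cat_inv_word u) (sge_refl _ _).
Qed.

Lemma sg_equiv_fraction a b c :
  sg_equiv op (a ++ word_inv b) ((a ++ c) ++ word_inv (b ++ c)).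
Proof.
rewrite word_inv_cat -catA (catA c); apply: sge_sym.
by have := sg_equiv_ctx a (word_inv b) (cat_word_inv c).
Qed.

End Words.

Arguments positive {n} l.

Section Evaluation.
Variables (n : nat) (s : 'I_n -> 'M[LF]_n).
Implicit Types (u v w : seq (letter n)).

Lemma eval_word_cat u v : eval_word s (u ++ v) = eval_word s u *m eval_word s v.
Proof. by elim: u => [|l u IHu] /=; rewrite ?mul1mx // IHu mulmxA. Qed.

Hypothesis s_unit : forall i, s i \in unitmx.

Lemma eval_letterK i b : eval_letter s (i, b) *m eval_letter s (i, ~~ b) = 1%:M.
Proof. by case: b; rewrite /eval_letter /= ?mulVmx ?mulmxV. Qed.

Lemma eval_word_invr w : eval_word s w *m eval_word s (word_inv w) = 1%:M.
Proof.
elim: w => [|[i b] w IHw] /=; first by rewrite mulmx1.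
rewrite word_inv_cons eval_word_cat -mulmxA (mulmxA (eval_word s w)) IHw mul1mx /=.
by rewrite mulmx1 eval_letterK.
Qed.

Lemma eval_word_unit w : eval_word s w \in unitmx.
Proof. exact: (mulmx1_unit (eval_word_invr w)).1. Qed.

Lemma eval_word_inv w : eval_word s (word_inv w) = invmx (eval_word s w).
Proof. by rewrite -[RHS]mulmx1 -(eval_word_invr w) mulKmx ?eval_word_unit. Qed.

Variable op : 'I_n -> 'I_n -> 'I_n.
Hypothesis s_rel : forall i j, s i *m s (op i j) = s j *m s (op j i).

Lemma eval_word_sound u v : sg_equiv op u v -> eval_word s u = eval_word s v.
Proof.
elim=> {u v} [// | w1 w2 _ -> // | w1 w2 w3 _ -> _ -> // | u v i b | u v i j _];
  rewrite !eval_word_cat /=; congr (_ *m _).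
- by rewrite mulmxA mulmx1 eval_letterK mul1mx.
- by rewrite /eval_letter /= !mulmxA s_rel.
Qed.

End Evaluation.

Section StructureGroup.
Variables (n : nat) (G : 'M[LF]_n -> Prop) (s : 'I_n -> 'M[LF]_n) (k : nat).
Hypothesis subG : subgroup_Sigma G.
Hypothesis atomsG : forall a, atom G a <-> exists i, a = s i.
Hypothesis genG : generates s G.
Hypothesis k_gt0 : (0 < k)%N.
Hypothesis Dpart_s : forall i, Dpart (s i) = mxpow (Dmat i) k.

Local Notation op := (fun i j => psi (s i) j).
Implicit Types (u v w : seq (letter n)).

Lemma group1G : G 1%:M.
Proof. by case: subG => -[]. Qed.

Lemma groupMG g h : G g -> G h -> G (g *m h).
Proof. by case: subG => -[_ [mulG _]] _; apply: mulG. Qed.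

Lemma groupVG g : G g -> g \in unitmx /\ G (invmx g).
Proof. by case: subG => -[_ [_ invG]] _; apply: invG. Qed.

Lemma monomialG g : G g -> exists d p, g = monomx d p.
Proof. by case: subG => _ monoG /monoG/monomialP. Qed.

Lemma atom_s i : atom G (s i).
Proof. by apply/atomsG; exists i. Qed.

Lemma sG i : G (s i).
Proof. by have [[]] := atom_s i. Qed.

Lemma s_unit i : s i \in unitmx.
Proof. exact: (groupVG (sG i)).1. Qed.

Definition kdelta (i r : 'I_n) : int := if r == i then k%:Z else 0.

Lemma kdelta_ge0 i r : 0 <= kdelta i r.
Proof. by rewrite /kdelta; case: ifP. Qed.

Lemma kdelta_dvd i r : (k%:Z %| kdelta i r)%Z.
Proof. by rewrite /kdelta; case: ifP. Qed.

Lemma sum_kdelta i : \sum_r kdelta i r = k%:Z.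
Proof. by rewrite (bigD1 i) //= big1 ?addr0 /kdelta ?eqxx // => r /negbTE ->. Qed.

Lemma s_monomx : exists τ : 'I_n -> 'S_n, forall i, s i = monomx (kdelta i) (τ i).
Proof.
apply: (@fin_all_exists _ (fun _ => 'S_n) (fun i p => s i = monomx (kdelta i) p)) => i.
have [d [p sE]] := monomialG (sG i); exists p; rewrite sE; apply: monomx_ext => r.
by have := Dpart_s i; rewrite sE Dpart_monomx mxpow_Dmat => /monomx_inj[_ /(_ r)].
Qed.

Variable τ : 'I_n -> 'S_n.
Hypothesis sE : forall i, s i = monomx (kdelta i) (τ i).

Lemma opE i j : psi (s i) j = τ i j.
Proof. by rewrite sE psi_monomx. Qed.

Lemma monomx0G p : G (monomx (fun _ => 0) p) -> p = 1%g.
Proof.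
move=> Gp; apply/permP=> x; suff -> : p = 1%g by [].
have [_ [_ atom_sx]] := atom_s x.
have Gp' : G (monomx (fun _ => 0) p^-1).
  have [_] := groupVG Gp; rewrite invmx_monomx.
  by rewrite (monomx_ext _ (d' := fun _ => 0)) // => r; rewrite oppr0.
case: (atom_sx (s x *m monomx (fun _ => 0) p^-1) (monomx (fun _ => 0) p)).
- split; first exact: groupMG (sG x) Gp'.
  by rewrite sE mul_monomx; apply: monomial_pos_monomx => r; rewrite addr0 kdelta_ge0.
- by split; last exact: monomial_pos_monomx.
- rewrite -mulmxA mul_monomx mulVg (monomx_ext _ (d' := fun _ => 0)) => [|r].
    by rewrite monomx1 mulmx1.
  by rewrite addr0.
- rewrite sE mul_monomx -monomx1 => /monomx_inj[_ /(_ x)].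
  by rewrite /kdelta eqxx addr0; lia.
- by rewrite -monomx1 => /monomx_inj[].
Qed.

Lemma permutation_freeG : permutation_free G.
Proof. by move=> p; rewrite perm_mx_monomx => /monomx0G. Qed.

Lemma monomxG_perm d p p' : G (monomx d p) -> G (monomx d p') -> p = p'.
Proof.
move=> Gp Gp'; have := groupMG (groupVG Gp).2 Gp'; rewrite monomx_ldiv.
rewrite (monomx_ext _ (d' := fun _ => 0)) => [/monomx0G p'p|r]; last by rewrite subrr.
by rewrite -[p']mul1g -(mulgV p) -mulgA p'p mulg1.
Qed.

Lemma s_rel_monomx i j : s i *m s (psi (s i) j) =
  monomx (fun r => kdelta i r + kdelta j r) (τ i * τ (τ i j))%g.
Proof.
rewrite opE !sE mul_monomx; apply: monomx_ext => r.
by rewrite /kdelta (inj_eq perm_inj).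
Qed.

Lemma s_rel i j : s i *m s (psi (s i) j) = s j *m s (psi (s j) i).
Proof.
have Gij := groupMG (sG i) (sG (psi (s i) j)).
have Gji := groupMG (sG j) (sG (psi (s j) i)).
have dC : (fun r => kdelta i r + kdelta j r) =1 (fun r => kdelta j r + kdelta i r).
  by move=> r; rewrite addrC.
rewrite !s_rel_monomx (monomx_ext _ dC) in Gij Gji *.
by rewrite (monomxG_perm Gij Gji).
Qed.

Lemma cycle_set_op : cycle_set op.
Proof.
split=> [i | i j l].
  by exists (τ i)^-1%g => x; rewrite opE ?permK ?permKV.
have := s_rel i j; rewrite !s_rel_monomx => /monomx_inj[τ_rel _].
by rewrite !opE -!permM τ_rel.
Qed.

Lemma eval_wordG w : G (eval_word s w).
Proof.
elim: w => [|[i b] w IHw]; first exact: group1G.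
by apply: groupMG IHw; case: b; [exact: (groupVG (sG i)).2 | exact: sG].
Qed.

Lemma G_eval_word g : G g <-> exists w, g = eval_word s w.
Proof.
split=> [Gg | [w ->]]; last exact: eval_wordG.
apply: (genG (H := fun g => exists w, g = eval_word s w)) Gg => [|i]; last first.
  by exists [:: (i, false)]; rewrite /= mulmx1.
split; first by exists [::].
split=> [_ _ [u ->] [v ->] | _ [u ->]]; first by exists (u ++ v); rewrite eval_word_cat.
split; first exact: eval_word_unit s_unit u.
by exists (word_inv u); rewrite eval_word_inv //; exact: s_unit.
Qed.

Lemma eval_word_dvd w :
  exists d p, eval_word s w = monomx d p /\ forall r, (k%:Z %| d r)%Z.
Proof.
elim: w => [|[i [] ] w [d [p [/= -> d_dvd]]]].
- by exists (fun _ => 0), 1%g; rewrite monomx1.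
- eexists _, _; split; first by rewrite /eval_letter /= sE invmx_monomx mul_monomx.
  by move=> r /=; rewrite rpredD ?rpredN ?d_dvd ?kdelta_dvd.
- eexists _, _; split; first by rewrite /eval_letter /= sE mul_monomx.
  by move=> r /=; rewrite rpredD ?d_dvd ?kdelta_dvd.
Qed.

Lemma monomxG_dvd d p r : G (monomx d p) -> (k%:Z %| d r)%Z.
Proof.
case/G_eval_word=> w; have [d' [p' [-> d'_dvd]]] := eval_word_dvd w.
by case/monomx_inj=> _ ->.
Qed.

Lemma eval_pos_word w : all positive w -> exists d p,
  [/\ eval_word s w = monomx d p, forall r, 0 <= d r & \sum_r d r = (k * size w)%:Z].
Proof.
elim: w => [|[i [] ] w IHw] //=.
  by exists (fun _ => 0), 1%g; rewrite monomx1 big1 ?muln0.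
case/IHw=> d [p [-> d_ge0 sum_d]].
exists (fun r => kdelta i r + d (τ i r)), (τ i * p)%g; split.
- by rewrite /eval_letter /= sE mul_monomx.
- by move=> r; rewrite addr_ge0 ?kdelta_ge0.
- by rewrite big_split /= sum_kdelta sum_perm sum_d; lia.
Qed.

Lemma pos_word_size u v : all positive u -> all positive v ->
  eval_word s u = eval_word s v -> size u = size v.
Proof.
move=> /eval_pos_word[d [p [-> _ sum_d]]] /eval_pos_word[d' [p' [-> _ sum_d']]].
case/monomx_inj=> _ dd'; apply/eqP; rewrite -(eqn_pmul2l k_gt0) -eqz_nat.
by rewrite -sum_d -sum_d'; apply/eqP/eq_bigr => r _.
Qed.

Lemma monomxG_pos_word d p : G (monomx d p) -> (forall r, 0 <= d r) ->
  exists2 w, all positive w & monomx d p = eval_word s w.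
Proof.
have [N] := ubnP `|\sum_r d r|; elim: N d p => // N IHN d p lt_sum Gdp d_ge0.
have [r d_r_gt0 | d_eq0] := pickP (fun r => 0 < d r); last first.
  have d0 : d =1 (fun _ => 0) by move=> r; have := d_eq0 r; have := d_ge0 r; lia.
  rewrite (monomx_ext _ d0) in Gdp *.
  by exists [::]; rewrite // (monomx0G Gdp) monomx1.
have k_le_dr : k%:Z <= d r := dvdz_le d_r_gt0 (monomxG_dvd r Gdp).
set e := fun t => d ((τ r)^-1 t)%g - kdelta r ((τ r)^-1 t)%g.
have eE : invmx (s r) *m monomx d p = monomx e ((τ r)^-1 * p)%g.
  by rewrite sE monomx_ldiv.
have Ge : G (monomx e ((τ r)^-1 * p)%g).
  by rewrite -eE; exact: groupMG (groupVG (sG r)).2 Gdp.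
have e_ge0 t : 0 <= e t.
  by rewrite /e /kdelta; case: eqP => [->|_]; rewrite ?subr0 ?subr_ge0.
have lt_sum_e : (`|(\sum_t e t)%R| < N)%N.
  have dr_le_sum : d r <= \sum_t d t.
    by rewrite (bigD1 r) //= lerDl sumr_ge0.
  move: lt_sum; rewrite /e big_split /= sumrN (sum_perm d) (sum_perm (kdelta r)).
  rewrite sum_kdelta.
  set S := (\sum_t d t)%R in dr_le_sum *; lia.
have [w pos_w wE] := IHN _ _ lt_sum_e Ge e_ge0.
exists ((r, false) :: w) => //=.
by rewrite -wE -eE mulKVmx ?s_unit.
Qed.

Lemma monomxG_ldiv e pe d p :
    G (monomx e pe) -> G (monomx d p) -> (forall r, e r <= d r) ->
  exists2 w, all positive w & monomx d p = monomx e pe *m eval_word s w.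
Proof.
move=> Ge Gd le_ed; have := groupMG (groupVG Ge).2 Gd; rewrite monomx_ldiv.
case/monomxG_pos_word=> [r | w pos_w wE]; first by rewrite subr_ge0.
by exists w; rewrite // -wE -monomx_ldiv mulKVmx ?monomx_unit.
Qed.

Lemma eval_pos_cons i w : all positive w -> exists d p,
  eval_word s ((i, false) :: w) = monomx d p /\ forall r, kdelta i r <= d r.
Proof.
case/eval_pos_word=> d [p [wE d_ge0 _]].
exists (fun r => kdelta i r + d (τ i r)), (τ i * p)%g; split.
  by rewrite /= /eval_letter /= wE sE mul_monomx.
by move=> r; rewrite lerDl.
Qed.

Lemma pos_word_common_multiple i j u v :
    i != j -> all positive u -> all positive v ->
  eval_word s ((i, false) :: u) = eval_word s ((j, false) :: v) ->
  exists2 w, all positive w &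
    eval_word s ((i, false) :: u) = s i *m s (psi (s i) j) *m eval_word s w.
Proof.
move=> ij /(eval_pos_cons i)[d [p [uE lb_i]]].
move=> /(eval_pos_cons j)[d' [p' [-> lb_j]]].
rewrite uE => /monomx_inj[_ dd'].
rewrite s_rel_monomx; apply: monomxG_ldiv => [||r].
- by rewrite -s_rel_monomx; apply: groupMG; apply: sG.
- by rewrite -uE; apply: eval_wordG.
- have := lb_i r; have := lb_j r; rewrite -dd' /kdelta.
  by have [-> | _] := eqVneq r i; [rewrite (negbTE ij) | case: (r == j)]; lia.
Qed.

Lemma pos_word_equiv u v : all positive u -> all positive v ->
  eval_word s u = eval_word s v -> sg_equiv op u v.
Proof.
have [m] := ubnP (size u); elim: m u v => // m IHm u v lt_um pos_u pos_v uv.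
move: lt_um pos_u pos_v uv (pos_word_size pos_u pos_v uv).
case: u v => [|[i [] ] u] [|[j [] ] v] //=; first by move=> *; apply: sge_refl.
move=> lt_um pos_u pos_v uv [size_uv].
have IH w1 w2 : size w1 = size u -> all positive w1 -> all positive w2 ->
    eval_word s w1 = eval_word s w2 -> sg_equiv op w1 w2.
  by move=> size_w1; apply: IHm; rewrite size_w1.
have [eq_ij | ij] := eqVneq i j.
  rewrite -eq_ij in uv *; apply: (sg_equiv_catl [:: (i, false)]); apply: IH => //.
  exact: (can_inj (mulKmx (s_unit i)) uv).
have [w pos_w uE] := pos_word_common_multiple ij pos_u pos_v uv.
apply: sge_trans (_ : sg_equiv op [:: (i, false), (psi (s i) j, false) & w] _).
  apply: (sg_equiv_catl [:: (i, false)]); apply: IH => //.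
  by apply: (can_inj (mulKmx (s_unit i))); move: uE => /= ->; rewrite mulmxA.
apply: sge_trans (sge_rel op [::] w ij) _.
apply: sge_sym; apply: (sg_equiv_catl [:: (j, false)]); apply: IH => //.
by apply: (can_inj (mulKmx (s_unit j))); move: uv uE => /= <- ->; rewrite s_rel mulmxA.
Qed.

Lemma ore_letter a i : all positive a ->
  exists j, exists2 a', all positive a' &
    eval_word s (a ++ [:: (j, false)]) = eval_word s ((i, false) :: a').
Proof.
case/eval_pos_word=> d [p [aE d_ge0 _]]; exists (p i).
have Gx := eval_wordG (a ++ [:: (p i, false)]).
rewrite eval_word_cat aE /= /eval_letter /= mulmx1 !sE mul_monomx in Gx *.
apply: monomxG_ldiv Gx _ => [|r]; first by rewrite -sE; apply: sG.
by rewrite /kdelta (inj_eq perm_inj); have := d_ge0 r; case: (r == i); lia.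
Qed.

Lemma ore_pos_word b b' : all positive b -> all positive b' -> exists c d,
  [/\ all positive c, all positive d & eval_word s (b ++ c) = eval_word s (b' ++ d)].
Proof.
elim: b' b => [|[i [] ] b' IHb'] b pos_b //=; first by exists [::], b; rewrite cats0.
move=> pos_b'; have [j [a' pos_a' a'E]] := ore_letter i pos_b.
have [c [d [pos_c pos_d cdE]]] := IHb' a' pos_a' pos_b'.
exists ((j, false) :: c), d; split=> //.
by rewrite -cat1s catA eval_word_cat a'E /= -cdE eval_word_cat mulmxA.
Qed.

Lemma word_fraction w : exists a b,
  [/\ all positive a, all positive b & sg_equiv op w (a ++ word_inv b)].
Proof.
elim: w => [|[i [] ] w [a [b [pos_a pos_b wE]]]].
- by exists [::], [::]; split=> //; apply: sge_refl.
- have [j [a' pos_a' a'E]] := ore_letter i pos_a.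
  have aj : sg_equiv op (a ++ [:: (j, false)]) ((i, false) :: a').
    by apply: pos_word_equiv a'E; rewrite ?all_cat ?pos_a.
  exists a', (b ++ [:: (j, false)]); split=> //; first by rewrite all_cat pos_b.
  rewrite word_inv_cat /=.
  apply: sge_trans (sg_equiv_catl [:: (i, true)] wE) _.
  apply: sge_trans (sge_cancel op [::] (a' ++ (j, true) :: word_inv b) i true).
  apply: (sg_equiv_catl [:: (i, true)]).
  apply: sge_trans (sg_equiv_cat aj (sge_refl op ((j, true) :: word_inv b))).
  by rewrite -catA; apply: sge_sym; apply: (sge_cancel op a (word_inv b) j false).
- exists ((i, false) :: a), b; split=> //.
  exact: (sg_equiv_catl [:: (i, false)] wE).
Qed.

Lemma eval_word_complete w1 w2 :
  eval_word s w1 = eval_word s w2 -> sg_equiv op w1 w2.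
Proof.
move=> w12.
have [a1 [b1 [pos_a1 pos_b1 w1E]]] := word_fraction w1.
have [a2 [b2 [pos_a2 pos_b2 w2E]]] := word_fraction w2.
have [c [d [pos_c pos_d bcd]]] := ore_pos_word pos_b1 pos_b2.
have evalE a b w : sg_equiv op w (a ++ word_inv b) ->
    eval_word s a = eval_word s w *m eval_word s b.
  move/(eval_word_sound s_unit s_rel)->.
  by rewrite eval_word_cat eval_word_inv ?mulmxKV ?eval_word_unit //; apply: s_unit.
have acd : eval_word s (a1 ++ c) = eval_word s (a2 ++ d).
  rewrite !eval_word_cat (evalE _ _ _ w1E) (evalE _ _ _ w2E) w12 -!mulmxA.
  by congr (_ *m _); rewrite -!eval_word_cat bcd.
apply: sge_trans w1E _; apply: sge_trans (sg_equiv_fraction _ _ _ c) _.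
apply: sge_trans _ (sge_sym w2E).
apply: sge_trans _ (sge_sym (sg_equiv_fraction _ _ _ d)).
apply: sg_equiv_cat; first by apply: pos_word_equiv acd; rewrite all_cat ?pos_a1 ?pos_a2.
by apply/sg_equiv_inv/(pos_word_equiv _ _ bcd); rewrite all_cat ?pos_b1 ?pos_b2.
Qed.

Lemma structure_groupG : is_structure_group op s G.
Proof.
split=> [w1 w2|g]; last exact: G_eval_word.
by split; [exact: eval_word_complete | exact: (eval_word_sound s_unit s_rel)].
Qed.

End StructureGroup.

Unset Implicit Arguments.

Theorem mainTheorem2 (n : nat) (G : 'M[LF]_n -> Prop) (s : 'I_n -> 'M[LF]_n)
    (k : nat) :
  subgroup_Sigma G ->
  injective s ->
  (forall a, atom G a <-> exists i, a = s i) ->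
  generates s G ->
  (0 < k)%N ->
  (forall i, Dpart (s i) = mxpow (Dmat i) k) ->
  let op := fun i j => psi (s i) j in
  [/\ (permutation_free G <-> forall i j, s i *m s (op i j) = s j *m s (op j i)),
      ((forall i j, s i *m s (op i j) = s j *m s (op j i)) <->
         cycle_set op /\ is_structure_group op s G)
    & (permutation_free G <-> cycle_set op /\ is_structure_group op s G)].
Proof.
move=> subG _ atomsG genG k_gt0 Dpart_s op.
have [τ sE] := s_monomx subG atomsG Dpart_s.
have pfree := permutation_freeG subG atomsG k_gt0 sE.
have rel := s_rel subG atomsG k_gt0 sE.
have cs_sg : cycle_set op /\ is_structure_group op s G.
  split; [exact: (cycle_set_op subG atomsG k_gt0 sE) |
          exact: (structure_groupG subG atomsG genG k_gt0 sE)].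
by split; split.
Qed.
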